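(* Let $g_1,\dots,g_N\in\mathbb{C}^K$ be nonzero vectors and $w_1,\dots,w_N\ge0$. Define for $\mathcal{S}\subseteq\mathcal{N}=\{1,\dots,N\}$ $$\mathrm{WFP}(\mathcal{S})=\sum_{i,j\in\mathcal{S}}w_iw_j\frac{|\langle g_i,g_j\rangle|^2}{\|g_i\|_2^2\|g_j\|_2^2},\qquad \mathrm{WFC}(\mathcal{T})=\mathrm{WFP}(\mathcal{N})-\mathrm{WFP}(\mathcal{N}\setminus\mathcal{T}).$$ Then $\mathrm{WFC}$ is normalized ($\mathrm{WFC}(\varnothing)=0$), monotone non-decreasing ($\mathcal{S}_1\subseteq\mathcal{S}_2\Rightarrow\mathrm{WFC}(\mathcal{S}_1)\le\mathrm{WFC}(\mathcal{S}_2)$), and submodular ($\mathrm{WFC}(\mathcal{S}_2\cup\{j\})-\mathrm{WFC}(\mathcal{S}_2)\le\mathrm{WFC}(\mathcal{S}_1\cup\{j\})-\mathrm{WFC}(\mathcal{S}_1)$ for all $\mathcal{S}_1\subseteq\mathcal{S}_2\subseteq\mathcal{N}$ and $j\in\mathcal{N}\setminus\mathcal{S}_2$).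
   Context: In the paper $g_i=\nabla_{\mathbf{x}}y_i$ is the gradient of the $i$-th measurement with respect to the unknown parameter vector (the $i$-th row of the measurement matrix in the linear case), and $w_i=\phi(\sigma_i)\in[0,1]$ is a weight depending on the noise level of sensor $i$. $\langle\cdot,\cdot\rangle$ is the standard inner product on $\mathbb{C}^K$. *)

From HB Require Import structures.
From mathcomp Require Import all_boot all_order all_algebra.
From mathcomp Require Import complex.
Set Implicit Arguments. Unset Strict Implicit. Unset Printing Implicit Defensive.
Import Order.TTheory GRing.Theory Num.Theory.
Local Open Scope ring_scope.

(* Vectors in C^K are modelled as functions 'I_K -> R[i], for R a real closed
   field (R[i] is then algebraically closed; R = reals gives C). *)

Section WFC.
Variables (R : rcfType) (K N : nat).

Definition cconj (z : R[i]) : R[i] := @Complex R (complex.Re z) (- complex.Im z).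

Definition cinner (u v : 'I_K -> R[i]) : R[i] := \sum_(k < K) u k * cconj (v k).

Definition cnorm2 (u : 'I_K -> R[i]) : R := \sum_(k < K) Normc.normc (u k) ^+ 2.

Variables (g : 'I_N -> 'I_K -> R[i]) (w : 'I_N -> R).

Definition WFP (S : {set 'I_N}) : R :=
  \sum_(i in S) \sum_(j in S)
     w i * w j * (Normc.normc (cinner (g i) (g j)) ^+ 2 / (cnorm2 (g i) * cnorm2 (g j))).

Definition WFC (T : {set 'I_N}) : R := WFP [set: 'I_N] - WFP (~: T).
End WFC.

From HB Require Import structures.
From mathcomp Require Import all_boot all_order all_algebra.
From mathcomp Require Import complex.
From mathcomp Require Import ring.
Set Implicit Arguments. Unset Strict Implicit.
Import Order.TTheory GRing.Theory Num.Theory.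
Local Open Scope ring_scope.

(* WFP(S) is a "pair sum" \sum_{i,j in S} a i j of a kernel a
   that is entrywise nonnegative (weights, squared moduli and squared norms are
   all >= 0).  Hence:
   - the pair sum is monotone in S, so WFC(T) = P(N) - P(~T) is normalized and
     monotone (T grows iff ~T shrinks);
   - removing one index j from a set A lowers the pair sum by the j-th "cross"
     term \sum_{i in A} a j i + \sum_{i in A\j} a i j, so the marginal gain
     WFC(S u {j}) - WFC(S) equals this cross term over A = ~S;
   - the cross term is monotone in A, and S1 <= S2 gives ~S2 <= ~S1, which is
     exactly submodularity. *)

Section PairSum.
Variables (R : numDomainType) (T : finType).

Lemma sum_subset_le (F : T -> R) (A B : {set T}) :
  (forall i, 0 <= F i) -> A \subset B -> \sum_(i in A) F i <= \sum_(i in B) F i.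
Proof.
move=> F_ge0 AB; rewrite [leRHS](big_setID A) /= (setIidPr AB) lerDl.
exact: sumr_ge0.
Qed.

Variable a : T -> T -> R.
Hypothesis a_ge0 : forall i k, 0 <= a i k.

Definition pairsum (A : {set T}) : R := \sum_(i in A) \sum_(k in A) a i k.

(* Contribution of j to the pair sum over A: the pairs (j, i) with i in A and
   the pairs (i, j) with i in A \ j (the diagonal pair is counted once). *)
Definition cross (A : {set T}) (j : T) : R :=
  \sum_(i in A) a j i + \sum_(i in A :\ j) a i j.

Lemma pairsum_subset_le (A B : {set T}) : A \subset B -> pairsum A <= pairsum B.
Proof.
move=> AB; apply: (@le_trans _ _ (\sum_(i in A) \sum_(k in B) a i k)).
  by apply: ler_sum => i _; apply: sum_subset_le.
by apply: sum_subset_le => // i; apply: sumr_ge0.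
Qed.

Lemma cross_subset_le (A B : {set T}) j : A \subset B -> cross A j <= cross B j.
Proof.
move=> AB; apply: lerD; apply: sum_subset_le => //.
exact: setSD.
Qed.

Lemma pairsum_setD1 (A : {set T}) j : j \in A ->
  pairsum A = pairsum (A :\ j) + cross A j.
Proof.
move=> jA; rewrite /pairsum /cross (big_setD1 j jA) /=.
rewrite [X in _ + X = _](eq_bigr (fun i => a i j + \sum_(k in A :\ j) a i k)).
  by rewrite big_split /=; ring.
by move=> i _; rewrite (big_setD1 j jA).
Qed.

Definition coverage (S : {set T}) : R := pairsum setT - pairsum (~: S).

Lemma coverage0 : coverage set0 = 0.
Proof. by rewrite /coverage setC0 subrr. Qed.

Lemma coverage_mono (S1 S2 : {set T}) : S1 \subset S2 -> coverage S1 <= coverage S2.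
Proof. by move=> S12; rewrite lerB // pairsum_subset_le // setCS. Qed.

Lemma coverage_gain (S : {set T}) j : j \notin S ->
  coverage (j |: S) - coverage S = cross (~: S) j.
Proof.
move=> jS; rewrite /coverage (@pairsum_setD1 (~: S) j) ?inE //.
have -> : ~: (j |: S) = ~: S :\ j by rewrite setCU setDE setIC.
ring.
Qed.

Lemma coverage_submod (S1 S2 : {set T}) j : S1 \subset S2 -> j \notin S2 ->
  coverage (j |: S2) - coverage S2 <= coverage (j |: S1) - coverage S1.
Proof.
move=> S12 jS2; have jS1 : j \notin S1 by apply: contra jS2; apply: (subsetP S12).
by rewrite !coverage_gain // cross_subset_le // setCS.
Qed.

End PairSum.

Section WFPKernel.
Variables (R : rcfType) (K N : nat) (g : 'I_N -> 'I_K -> R[i]) (w : 'I_N -> R).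

Definition wfp_kernel (i j : 'I_N) : R :=
  w i * w j * (Normc.normc (cinner (g i) (g j)) ^+ 2 / (cnorm2 (g i) * cnorm2 (g j))).

Lemma cnorm2_ge0 (u : 'I_K -> R[i]) : 0 <= cnorm2 u.
Proof. by apply: sumr_ge0 => k _; apply: sqr_ge0. Qed.

Lemma wfp_kernel_ge0 : (forall i, 0 <= w i) -> forall i j, 0 <= wfp_kernel i j.
Proof.
move=> w_ge0 i j; apply: mulr_ge0; first exact: mulr_ge0.
by apply: divr_ge0; [apply: sqr_ge0 | apply: mulr_ge0; apply: cnorm2_ge0].
Qed.

Lemma WFC_coverage (S : {set 'I_N}) : WFC g w S = coverage wfp_kernel S.
Proof. by rewrite /WFC /coverage /pairsum /WFP /wfp_kernel. Qed.

End WFPKernel.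

Theorem mainTheorem6 (R : rcfType) (K N : nat)
  (g : 'I_N -> 'I_K -> R[i]) (w : 'I_N -> R)
  (hg : forall i, g i <> (fun _ => 0))
  (hw : forall i, 0 <= w i) :
  [/\ WFC g w set0 = 0,
      (forall S1 S2 : {set 'I_N}, S1 \subset S2 -> WFC g w S1 <= WFC g w S2)
    & (forall (S1 S2 : {set 'I_N}) (j : 'I_N), S1 \subset S2 -> j \notin S2 ->
         WFC g w (j |: S2) - WFC g w S2 <= WFC g w (j |: S1) - WFC g w S1)].
Proof.
have a_ge0 := wfp_kernel_ge0 g hw.
split.
- by rewrite WFC_coverage coverage0.
- by move=> S1 S2 S12; rewrite !WFC_coverage coverage_mono.
- by move=> S1 S2 j S12 jS2; rewrite !WFC_coverage coverage_submod.
Qed.
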